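(* Consider problem (P2) with constraints C1 and C4 removed, i.e. maximize over the binary selection $x\in\{0,1\}^K$ (equivalently over sets $\Psi\subseteq\mathcal{K}$) the value $EE^*_\Psi$. Suppose the trading EEs satisfy, after relabeling, $EE^*_1>EE^*_2>\dots>EE^*_K$. Algorithm 2 is: set $\Psi=\emptyset$; for $k=1,\dots,K$ in this order, if $EE^*_{\Psi\cup\{k\}}>EE^*_\Psi$ then replace $\Psi$ by $\Psi\cup\{k\}$; output $\Psi$. Then the set $\Psi$ output by Algorithm 2 is optimal, i.e. $EE^*_\Psi\ge EE^*_{\Psi'}$ for every $\Psi'\subseteq\mathcal{K}$.
   Context: Setting: $\mathcal{K}=\{1,\dots,K\}$ macro users (MUs), $\mathcal{N}=\{1,\dots,N\}$ small-cell users (SUs). Constants: $N_0>0$, $\xi\in(0,1]$, $P_{\rm c}>0$; for each $k$: $W^k_{MC}>0$, $R^k_{MC}>0$, $h_k>0$, $g_{k,n}>0$ ($n\in\mathcal{N}$); for each $n$: $B^n_{SC}>0$, $g_n>0$. Let $k'\in\arg\max_{n}g_{k,n}$ and $\rho(b,p,g)=b\log_2(1+\frac{pg}{bN_0})$ ($=0$ if $b=0$). For $\Psi\subseteq\mathcal{K}$, $EE^*_\Psi$ is the optimal value of: with $x_k=\mathbf 1[k\in\Psi]$, maximize over $p_n\ge0$, $p_{k,k'}\ge0$, $b_{k,k'}\ge0$, $q_k\ge0$, $w_k\ge0$ $$\frac{\sum_{n}\rho(B^n_{SC},p_n,g_n)+\sum_{k}x_k\rho(b_{k,k'},p_{k,k'},g_{k,k'})}{\sum_n\frac{p_n}{\xi}+\sum_kx_k\frac{p_{k,k'}}{\xi}+\sum_kx_k\frac{q_k}{\xi}+P_{\rm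 c}}$$ subject only to $b_{k,k'}+w_k=x_kW^k_{MC}$ and $\rho(w_k,q_k,h_k)=x_kR^k_{MC}$ for all $k$ (no total power constraint and no minimum system rate constraint). For each $k$, the trading EE $EE^*_k$ is the optimal value of: maximize over $p_{k,k'}\ge0$, $b_{k,k'}\ge0$, $q_k\ge0$, $w_k\ge0$ the ratio $\frac{\rho(b_{k,k'},p_{k,k'},g_{k,k'})}{p_{k,k'}/\xi+q_k/\xi}$ subject to $b_{k,k'}+w_k\le W^k_{MC}$ and $\rho(w_k,q_k,h_k)\ge R^k_{MC}$. *)

From HB Require Import structures.
From mathcomp Require Import all_boot all_order all_algebra.
From mathcomp Require Import all_classical all_reals.
From mathcomp Require Import exp.
Set Implicit Arguments. Unset Strict Implicit. Unset Printing Implicit Defensive.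
Import Order.TTheory GRing.Theory Num.Theory.
Local Open Scope classical_set_scope.
Local Open Scope ring_scope.

Section Defs.
Variable R : realType.

Definition rho (N0 b p g : R) : R :=
  if b == 0 then 0 else b * (ln (1 + p * g / (b * N0)) / ln 2).

Variables (K N : nat).

Definition xsel (Psi : {set 'I_K}) (k : 'I_K) : R := if k \in Psi then 1 else 0.

(* Parameters: N0, xi, Pc, W_MC, R_MC, h, g (g k n = g_{k,n}), kp (k'),
   B_SC, gs (g_n). *)
Definition EEobj_set (N0 xi Pc : R) (W Rm h : 'I_K -> R) (g : 'I_K -> 'I_N -> R)
  (kp : 'I_K -> 'I_N) (B gs : 'I_N -> R) (Psi : {set 'I_K}) : set R :=
  [set r | exists (p : 'I_N -> R) (pk bk qk wk : 'I_K -> R),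
     (forall n, 0 <= p n) /\
     (forall k, [/\ 0 <= pk k, 0 <= bk k, 0 <= qk k & 0 <= wk k]) /\
     (forall k, bk k + wk k = xsel Psi k * W k) /\
     (forall k, rho N0 (wk k) (qk k) (h k) = xsel Psi k * Rm k) /\
     r = (\sum_(n < N) rho N0 (B n) (p n) (gs n)
          + \sum_(k < K) xsel Psi k * rho N0 (bk k) (pk k) (g k (kp k)))
         / (\sum_(n < N) p n / xi + \sum_(k < K) xsel Psi k * (pk k / xi)
            + \sum_(k < K) xsel Psi k * (qk k / xi) + Pc)].

Definition EEopt N0 xi Pc W Rm h g kp B gs Psi : R :=
  sup (EEobj_set N0 xi Pc W Rm h g kp B gs Psi).

Definition EEtrade_set (N0 xi : R) (W Rm h : 'I_K -> R) (g : 'I_K -> 'I_N -> R)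
  (kp : 'I_K -> 'I_N) (k : 'I_K) : set R :=
  [set r | exists pkk bkk qk wk : R,
     [/\ 0 <= pkk, 0 <= bkk, 0 <= qk & 0 <= wk] /\
     bkk + wk <= W k /\ Rm k <= rho N0 wk qk (h k) /\
     r = rho N0 bkk pkk (g k (kp k)) / (pkk / xi + qk / xi)].

Definition EEtrade N0 xi W Rm h g kp k : R :=
  sup (EEtrade_set N0 xi W Rm h g kp k).

Definition alg2 (EE : {set 'I_K} -> R) : {set 'I_K} :=
  foldl (fun Psi k => if EE Psi < EE (k |: Psi) then k |: Psi else Psi)
        (finset.set0 : {set 'I_K}) (enum 'I_K).

End Defs.

From HB Require Import structures.
From mathcomp Require Import all_boot all_order all_algebra.
From mathcomp Require Import all_classical all_reals.
From mathcomp Require Import sequences exp convex ring lra.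
Set Implicit Arguments. Unset Strict Implicit. Unset Printing Implicit Defensive.
Import Order.TTheory GRing.Theory Num.Theory.
Local Open Scope ring_scope.

(* EE*_Psi is a supremum of rate/power ratios, so by Dinkelbach's parametric view
   EE*_P <= mu as soon as rate - mu * power <= 0 at every feasible point of P.  After
   tightening its trade, an MU [k] can contribute positively at level [mu] exactly when
   mu < EE*_k; this yields an exchange property: EE*_P <= mu whenever EE*_S <= mu, every
   MU of S \ P has EE*_k > mu and every MU of P \ S has EE*_k <= mu.  Adding an MU with
   EE*_k > EE*_S strictly increases EE*, because near-optimal points have bounded power
   (rates grow only like the square root of power).  Scanning the MUs by decreasing
   EE*_k, the greedy set Psi therefore ends with EE*_k <= EE*_Psi for every rejected MU
   and EE*_k > EE*_Psi for every accepted MU but the last one, and the exchange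
   property compares Psi with any Psi'. *)

Lemma ler_sum_term (R : numDomainType) (I : finType) (P : pred I) (F : I -> R) i :
  (forall j, P j -> 0 <= F j) -> P i -> F i <= \sum_(j | P j) F j.
Proof.
move=> F_ge0 Pi; rewrite (bigD1 i) //= lerDl.
by apply: sumr_ge0 => j /andP[/F_ge0].
Qed.

Lemma finite_family_ubound (R : realDomainType) (I : finType) (F : I -> R) :
  exists2 M, 0 <= M & forall i, F i <= M.
Proof.
exists (\sum_i `|F i|); first exact: sumr_ge0.
move=> i; apply: le_trans (ler_norm _) _.
by apply: (@ler_sum_term _ _ xpredT (fun j => `|F j|)) => // j _.
Qed.

Lemma ln2_gt0 (R : realType) : 0 < ln (2 : R).
Proof. by apply: ln_gt0; lra. Qed.

Lemma scale_ln1D_le (R : realType) (t x : R) : 0 <= t <= 1 -> 0 <= x ->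
  t * ln (1 + x) <= ln (1 + t * x).
Proof.
move=> /andP[t_ge0 t_le1] x_ge0.
have := @concave_ln R (interval_inference.Itv01 t_ge0 t_le1) (1 + x) 1
  ltac:(lra) ltac:(lra).
rewrite !convRE /= /unstable.onem ln1 mulr0 addr0.
by have -> : t * (1 + x) + (1 - t) * 1 = 1 + t * x by lra.
Qed.

Section Rho.
Variables (R : realType) (N0 : R).
Hypothesis N0_gt0 : 0 < N0.
Local Notation rho := (rho N0).

Lemma rho0 (p g : R) : rho 0 p g = 0.
Proof. by rewrite /rho eqxx. Qed.

Lemma rhoE (b p g : R) : 0 < b -> rho b p g = b * (ln (1 + p * g / (b * N0)) / ln 2).
Proof. by move=> b_gt0; rewrite /rho gt_eqF. Qed.

Lemma rho_p0 (w g : R) : rho w 0 g = 0.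
Proof. by rewrite /rho; case: ifP => // _; rewrite !mul0r addr0 ln1 mul0r mulr0. Qed.

Lemma rho_ge0 (b p g : R) : 0 <= b -> 0 <= p -> 0 <= g -> 0 <= rho b p g.
Proof.
rewrite le_eqVlt => /predU1P[<-|b_gt0] p_ge0 g_ge0; first by rewrite rho0.
rewrite rhoE // mulr_ge0 ?divr_ge0 ?(ltW b_gt0) ?(ltW (ln2_gt0 R)) // ln_ge0 //.
by rewrite lerDl !(divr_ge0, mulr_ge0) // ltW.
Qed.

Lemma rho_le_linear (b p g : R) : 0 <= b -> 0 <= p -> 0 <= g ->
  rho b p g <= p * g / (N0 * ln 2).
Proof.
rewrite le_eqVlt => /predU1P[<-|b_gt0] p_ge0 g_ge0.
  by rewrite rho0 !(divr_ge0, mulr_ge0) // ltW // ln2_gt0.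
have l2 := ln2_gt0 R; set y := p * g / (b * N0).
have y_ge0 : 0 <= y by rewrite /y !(divr_ge0, mulr_ge0) // ltW.
have -> : p * g / (N0 * ln 2) = b * y / ln 2 by rewrite /y; field; rewrite !gt_eqF.
rewrite rhoE // -/y mulrA ler_pM2r ?invr_gt0 // ler_pM2l //.
by apply: le_ln1Dx; lra.
Qed.

(* From [ln (1 + y) <= 2 sqrt (1 + y)]: rates grow like the square root of power. *)
Lemma rho_le_sqrt (b p g : R) : 0 <= b -> 0 <= p -> 0 <= g ->
  rho b p g <= 2 / ln 2 * Num.sqrt (b ^+ 2 + b * p * g / N0).
Proof.
rewrite le_eqVlt => /predU1P[<-|b_gt0] p_ge0 g_ge0.
  by rewrite rho0 mulr_ge0 ?sqrtr_ge0 // divr_ge0 // ltW // ln2_gt0.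
have l2 := ln2_gt0 R; set y := p * g / (b * N0).
have y_ge0 : 0 <= y by rewrite /y !(divr_ge0, mulr_ge0) // ltW.
have -> : b ^+ 2 + b * p * g / N0 = b ^+ 2 * (1 + y) by rewrite /y; field; rewrite !gt_eqF.
rewrite sqrtrM ?sqr_ge0 // sqrtr_sqr gtr0_norm // rhoE // -/y.
have s_gt0 : 0 < Num.sqrt (1 + y) by rewrite sqrtr_gt0; lra.
have ln_le : ln (1 + y) <= 2 * Num.sqrt (1 + y).
  rewrite -{1}(sqr_sqrtr (_ : 0 <= 1 + y)); last by lra.
  by rewrite lnXn // mulr2n; have := ln_sublinear s_gt0; lra.
have -> : 2 / ln 2 * (b * Num.sqrt (1 + y)) = b * (2 * Num.sqrt (1 + y)) / ln 2.
  by field; rewrite gt_eqF.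
by rewrite mulrA ler_pM2r ?invr_gt0 // ler_pM2l.
Qed.

Lemma rho_le_sqrt_bound (b p g b' p' g' : R) :
  0 <= b <= b' -> 0 <= p <= p' -> 0 <= g <= g' ->
  rho b p g <= 2 / ln 2 * Num.sqrt (b' ^+ 2 + b' * p' * g' / N0).
Proof.
move=> /andP[b_ge0 bb'] /andP[p_ge0 pp'] /andP[g_ge0 gg'].
apply: le_trans (rho_le_sqrt b_ge0 p_ge0 g_ge0) _.
have rhs_ge0 : 0 <= b' ^+ 2 + b' * p' * g' / N0.
  by rewrite addr_ge0 ?sqr_ge0 // !(divr_ge0, mulr_ge0) ?(ltW N0_gt0) //; lra.
rewrite ler_pM2l ?divr_gt0 ?ln2_gt0 // ler_sqrt //.
apply: lerD; first by rewrite ler_sqr ?nnegrE //; lra.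
rewrite ler_pM2r ?invr_gt0 //.
by apply: ler_pM; rewrite ?mulr_ge0 // ler_pM.
Qed.

(* Concavity of [ln] makes [b * ln (1 + c / b)] nondecreasing in the bandwidth [b]. *)
Lemma rho_le_bw (b b' p g : R) : 0 <= b <= b' -> 0 <= p -> 0 <= g ->
  rho b p g <= rho b' p g.
Proof.
rewrite le_eqVlt => /andP[/predU1P[<-|b_gt0] bb'] p_ge0 g_ge0.
  by rewrite rho0 rho_ge0 //.
have b'_gt0 : 0 < b' by lra.
rewrite !rhoE // !mulrA ler_pM2r ?invr_gt0 ?ln2_gt0 //.
set x := p * g / (b * N0).
have x_ge0 : 0 <= x by rewrite /x !(divr_ge0, mulr_ge0) // ltW.
have t01 : 0 <= b / b' <= 1.
  by rewrite divr_ge0 ?(ltW b_gt0) ?(ltW b'_gt0) //= ler_pdivrMr // mul1r.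
have := ler_wpM2l (ltW b'_gt0) (scale_ln1D_le t01 x_ge0).
have -> : b / b' * x = p * g / (b' * N0) by rewrite /x; field; rewrite !gt_eqF.
by have -> : b' * (b / b' * ln (1 + x)) = b * ln (1 + x) by field; rewrite gt_eqF.
Qed.

Lemma rho_le_power (w q q' g : R) : 0 < w -> 0 < g -> 0 <= q -> 0 <= q' ->
  (rho w q g <= rho w q' g) = (q <= q').
Proof.
move=> w_gt0 g_gt0 q_ge0 q'_ge0; rewrite !rhoE // !mulrA.
have wN0_gt0 : 0 < w * N0 by rewrite mulr_gt0.
rewrite ler_pM2r ?invr_gt0 ?ln2_gt0 // ler_pM2l // ler_ln ?posrE; last 2 first.
- by rewrite ltr_pwDl // !(divr_ge0, mulr_ge0) // ltW.
- by rewrite ltr_pwDl // !(divr_ge0, mulr_ge0) // ltW.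
by rewrite lerD2l ler_pM2r ?invr_gt0 // ler_pM2r.
Qed.

(* The inverse of [rho w _ g]: the power reaching rate [r] on bandwidth [w]. *)
Definition power_for_rate (r w g : R) := (expR (r * ln 2 / w) - 1) * w * N0 / g.

Lemma power_for_rate_gt0 (r w g : R) : 0 < r -> 0 < w -> 0 < g -> 0 < power_for_rate r w g.
Proof.
move=> r_gt0 w_gt0 g_gt0; have l2 := ln2_gt0 R.
by rewrite !divr_gt0 ?mulr_gt0 // subr_gt0 expR_gt1 divr_gt0 ?mulr_gt0.
Qed.

Lemma rho_power_for_rate (r w g : R) : 0 < w -> 0 < g -> rho w (power_for_rate r w g) g = r.
Proof.
move=> w_gt0 g_gt0; rewrite rhoE //.
have -> : 1 + power_for_rate r w g * g / (w * N0) = expR (r * ln 2 / w).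
  by rewrite /power_for_rate; field; rewrite !gt_eqF.
by rewrite expRK; field; rewrite !gt_eqF ?ln2_gt0.
Qed.

End Rho.

Section SqrtGrowth.
Variables (R : rcfType) (C a d : R).
Hypotheses (C_ge0 : 0 <= C) (a_ge0 : 0 <= a) (d_ge0 : 0 <= d).

Lemma ratio_le_of_sqrt_bound (X Y y0 : R) : 0 < y0 -> y0 <= Y ->
  X <= C * Num.sqrt (a + d * Y) -> X / Y <= C * (1 + a) / y0 + C * d.
Proof.
move=> y0_gt0 y0_le X_le; have Y_gt0 : 0 < Y by exact: lt_le_trans y0_le.
have sqrt_le : Num.sqrt (a + d * Y) <= 1 + (a + d * Y).
  have z_ge0 : 0 <= a + d * Y by rewrite addr_ge0 // mulr_ge0 // ltW.
  rewrite -[leRHS]gtr0_norm ?ltr_pwDl // -sqrtr_sqr ler_sqrt ?sqr_ge0 //.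
  by rewrite expr2; nra.
rewrite ler_pdivrMr //; apply: le_trans X_le _.
apply: le_trans (ler_wpM2l C_ge0 sqrt_le) _.
have : C * (1 + a) <= C * (1 + a) / y0 * Y.
  have one_le : 1 <= Y / y0 by rewrite ler_pdivlMr // mul1r.
  rewrite mulrAC -mulrA; have := mulr_ge0 C_ge0 (addr_ge0 ler01 a_ge0).
  nra.
nra.
Qed.

Lemma le_of_sqrt_bound (lam Y : R) : 0 < lam -> 0 <= Y ->
  lam * Y <= C * Num.sqrt (a + d * Y) -> Y <= 1 + C ^+ 2 * (a + d) / lam ^+ 2.
Proof.
move=> lam_gt0 Y_ge0 Y_le.
have rhs_ge0 : 0 <= C ^+ 2 * (a + d) / lam ^+ 2.
  by rewrite divr_ge0 ?sqr_ge0 // mulr_ge0 ?sqr_ge0 ?addr_ge0.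
have [Y_le1|Y_gt1] := lerP Y 1; first lra.
apply: ler_wpDl; first lra.
have z_ge0 : 0 <= a + d * Y by rewrite addr_ge0 // mulr_ge0.
have sq_le : (lam * Y) ^+ 2 <= C ^+ 2 * (a + d * Y).
  rewrite -(sqr_sqrtr z_ge0) -exprMn ler_sqr ?nnegrE ?mulr_ge0 ?sqrtr_ge0 //; lra.
rewrite ler_pdivlMr ?exprn_gt0 //.
have : C ^+ 2 * (a + d * Y) <= C ^+ 2 * (a + d) * Y.
  by rewrite -mulrA ler_wpM2l ?sqr_ge0 // mulrDl lerD2r ler_peMr // ltW.
have : 0 <= lam ^+ 2 := sqr_ge0 lam.
rewrite exprMn in sq_le; nra.
Qed.

End SqrtGrowth.

(* The paper's [p_{k,k'}, b_{k,k'}, q_k, w_k]: the power and bandwidth MU [k]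
   spends relaying for SU [k'], and those it keeps for its own link. *)
Record trade (R : Type) := Trade { relay_pow : R; relay_bw : R; own_pow : R; own_bw : R }.

Section Trade.
Variables (R : realType) (N0 xi W Rm h g : R).
Hypotheses (N0_gt0 : 0 < N0) (xi_gt0 : 0 < xi) (W_gt0 : 0 < W) (Rm_gt0 : 0 < Rm)
  (h_gt0 : 0 < h) (g_gt0 : 0 < g).

Definition trade_rate (t : trade R) := rho N0 (relay_bw t) (relay_pow t) g.
Definition trade_power (t : trade R) := relay_pow t / xi + own_pow t / xi.

Definition trade_nonneg (t : trade R) :=
  [/\ 0 <= relay_pow t, 0 <= relay_bw t, 0 <= own_pow t & 0 <= own_bw t].
Definition trade_ok (t : trade R) := [/\ trade_nonneg t,
  relay_bw t + own_bw t <= W & Rm <= rho N0 (own_bw t) (own_pow t) h].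
Definition trade_tight (t : trade R) := [/\ trade_nonneg t,
  relay_bw t + own_bw t = W & rho N0 (own_bw t) (own_pow t) h = Rm].

Definition trade_ratios := [set trade_rate t / trade_power t | t in trade_ok]%classic.
Definition trade_ee := sup trade_ratios.

Lemma trade_tight_ok t : trade_tight t -> trade_ok t.
Proof. by case=> t_ge0 bw rate; split; rewrite // ?bw ?rate. Qed.

Lemma trade_ok_own_gt0 t : trade_ok t -> 0 < own_pow t /\ 0 < own_bw t.
Proof.
case=> -[_ _ q_ge0 w_ge0] _ rate_ok.
split; rewrite lt_def ?q_ge0 ?w_ge0 andbT; apply/eqP => t0; move: rate_ok;
  by rewrite t0 ?rho_p0 ?rho0 leNgt Rm_gt0.
Qed.

Lemma trade_power_ge0 t : trade_nonneg t -> 0 <= trade_power t.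
Proof. by case=> p_ge0 _ q_ge0 _; rewrite addr_ge0 ?divr_ge0 // ltW. Qed.

Lemma trade_power_gt0 t : trade_ok t -> 0 < trade_power t.
Proof.
move=> t_ok; have [q_gt0 _] := trade_ok_own_gt0 t_ok; case: t_ok => -[p_ge0 _ _ _] _ _.
by rewrite /trade_power ltr_wpDl ?divr_ge0 ?divr_gt0 // ltW.
Qed.

Lemma trade_rate_ge0 t : trade_nonneg t -> 0 <= trade_rate t.
Proof. by case=> p_ge0 b_ge0 _ _; rewrite rho_ge0 // ltW. Qed.

Lemma trade_rate_le_power t : trade_nonneg t ->
  trade_rate t <= g * xi / (N0 * ln 2) * trade_power t.
Proof.
case=> p_ge0 b_ge0 q_ge0 _.
apply: le_trans (rho_le_linear N0_gt0 b_ge0 p_ge0 (ltW g_gt0)) _.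
have -> : relay_pow t * g / (N0 * ln 2) = g * xi / (N0 * ln 2) * (relay_pow t / xi).
  by field; rewrite !gt_eqF ?ln2_gt0.
apply: ler_wpM2l; first by rewrite !(divr_ge0, mulr_ge0) // ltW ?ln2_gt0.
by rewrite /trade_power lerDl divr_ge0 // ltW.
Qed.

Definition idle_trade := Trade 0 0 (power_for_rate N0 Rm W h) W.

Lemma idle_trade_tight : trade_tight idle_trade.
Proof.
split; rewrite /= ?add0r ?rho_power_for_rate //.
by split; rewrite // ltW // power_for_rate_gt0.
Qed.

(* Leftover bandwidth is better relayed, and the own link needs only the power
   that meets the rate requirement exactly. *)
Lemma trade_tighten t : trade_ok t ->
  exists2 t', trade_tight t' &
    trade_rate t <= trade_rate t' /\ trade_power t' <= trade_power t.
Proof.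
move=> t_ok; have [q_gt0 w_gt0] := trade_ok_own_gt0 t_ok.
case: t_ok => -[p_ge0 b_ge0 _ _] bw_le rate_le.
pose q' := power_for_rate N0 Rm (own_bw t) h.
have q'_gt0 : 0 < q' by exact: power_for_rate_gt0.
have rate_q' : rho N0 (own_bw t) q' h = Rm by exact: rho_power_for_rate.
have bw'_ge0 : relay_bw t <= W - own_bw t by lra.
exists (Trade (relay_pow t) (W - own_bw t) q' (own_bw t)).
  by split=> //=; [split=> //=; [lra | exact: ltW | exact: ltW] | rewrite subrK].
split; first by apply: rho_le_bw => //=; rewrite ?b_ge0 // ltW.
rewrite /trade_power lerD2l ler_pM2r ?invr_gt0 //=.
by rewrite -(rho_le_power N0_gt0 w_gt0 h_gt0 (ltW q'_gt0) (ltW q_gt0)) rate_q'.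
Qed.

Lemma trade_ratios_ne : (trade_ratios !=set0)%classic.
Proof.
by exists (trade_rate idle_trade / trade_power idle_trade), idle_trade;
  rewrite //; apply/trade_tight_ok/idle_trade_tight.
Qed.

Lemma trade_ratios_ub : has_ubound trade_ratios.
Proof.
exists (g * xi / (N0 * ln 2)) => _ [t t_ok <-].
rewrite ler_pdivrMr ?trade_power_gt0 // trade_rate_le_power //.
by case: t_ok.
Qed.

Lemma trade_rate_le_ee t : trade_ok t -> trade_rate t <= trade_ee * trade_power t.
Proof.
move=> t_ok; rewrite -ler_pdivrMr ?trade_power_gt0 //.
by apply: (ub_le_sup trade_ratios_ub); exists t.
Qed.

Lemma tight_trade_gt mu : 0 <= mu -> mu < trade_ee ->
  exists2 t, trade_tight t & mu * trade_power t < trade_rate t.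
Proof.
move=> mu_ge0 /(sup_gt trade_ratios_ne) [_ [t t_ok <-]].
rewrite ltr_pdivlMr ?trade_power_gt0 // => lt_mu.
have [t' t'_tight [rate_le power_le]] := trade_tighten t_ok.
by exists t' => //; apply: le_lt_trans (lt_le_trans lt_mu rate_le); rewrite ler_wpM2l.
Qed.

End Trade.

Section Greedy.
Variables (R : realType) (K : nat) (EE : {set 'I_K} -> R) (E : 'I_K -> R).
Hypothesis EE_exchange : forall (S P : {set 'I_K}) (mu : R), EE S <= mu ->
  {in S :\: P, forall k, mu < E k} -> {in P :\: S, forall k, E k <= mu} -> EE P <= mu.
Hypothesis EE_setU1_gt :
  forall (S : {set 'I_K}) k, k \notin S -> EE S < E k -> EE S < EE (k |: S).
Hypothesis E_decr : forall i j : 'I_K, (i < j)%N -> E j < E i.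

Definition greedy_step (Psi : {set 'I_K}) k :=
  if EE Psi < EE (k |: Psi) then k |: Psi else Psi.

(* [m] is the element added last, if any. *)
Definition greedy_inv (D Psi : {set 'I_K}) :=
  [/\ {subset Psi <= D}, {in D :\: Psi, forall k, E k <= EE Psi} &
      Psi = finset.set0 \/ exists2 m, m \in Psi &
        {in Psi :\ m, forall j, E m < E j} /\ EE (Psi :\ m) < EE Psi].

Lemma greedy_inv_step D Psi (k : 'I_K) :
  greedy_inv D Psi -> {in D, forall d : 'I_K, (d < k)%N} ->
  greedy_inv (k |: D) (greedy_step Psi k).
Proof.
case=> sub_PsiD le_out last_Psi lt_k.
have kD : k \notin D by apply/negP => /lt_k; rewrite ltnn.
have kPsi : k \notin Psi by apply: contra kD; exact: sub_PsiD.
rewrite /greedy_step; case: ltP => [lt_add|le_add].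
  split.
  - by move=> j; rewrite !inE => /predU1P[->|/sub_PsiD ->]; rewrite ?eqxx ?orbT.
  - move=> j; rewrite !inE negb_or => /andP[/andP[jk jPsi] /predU1P[/eqP|jD]].
      by rewrite (negPf jk).
    by apply: le_trans (ltW lt_add); apply: le_out; rewrite inE jPsi.
  - right; exists k; first exact: setU11.
    rewrite setU1K //; split=> // j jPsi.
    by apply/E_decr/lt_k/sub_PsiD.
split=> //; first by move=> j /sub_PsiD jD; rewrite inE jD orbT.
move=> j; rewrite !inE => /andP[jPsi /predU1P[->|jD]].
  by rewrite leNgt; apply/negP => /(EE_setU1_gt kPsi); rewrite ltNge le_add.
by apply: le_out; rewrite inE jPsi.
Qed.

Lemma greedy_inv_foldl (s : seq 'I_K) D Psi : greedy_inv D Psi ->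
  sorted (fun i j : 'I_K => (i < j)%N) s -> {in D & s, forall d k : 'I_K, (d < k)%N} ->
  greedy_inv (D :|: [set x in s]) (foldl greedy_step Psi s).
Proof.
elim: s D Psi => [|k s IH] D Psi inv_Psi sorted_s lt_Ds /=.
  have -> : [set x : 'I_K in [::]] = finset.set0 by apply/setP => x; rewrite !inE.
  by rewrite finset.setU0.
have lt_ks : {in s, forall j : 'I_K, (k < j)%N}.
  by apply/allP/(order_path_min (fun _ _ _ => @ltn_trans _ _ _) sorted_s).
rewrite (_ : D :|: _ = (k |: D) :|: [set x in s]); last first.
  by apply/setP => x; rewrite !inE orbA (orbC (x \in D)).
apply: IH (path_sorted sorted_s) _.
  by apply: greedy_inv_step => // d dD; apply: lt_Ds; rewrite ?inE ?eqxx.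
move=> d j; rewrite !inE => /predU1P[->|dD] js; first exact: lt_ks.
by apply: lt_Ds; rewrite ?inE ?js ?orbT.
Qed.

Lemma greedy_inv_alg2 : greedy_inv [set: 'I_K] (alg2 EE).
Proof.
have sorted_enum : sorted (fun i j : 'I_K => (i < j)%N) (enum 'I_K).
  by have := iota_ltn_sorted 0 K; rewrite -val_enum_ord sorted_map.
have := @greedy_inv_foldl (enum 'I_K) finset.set0 finset.set0.
rewrite (_ : finset.set0 :|: _ = [set: 'I_K]); last first.
  by apply/setP => x; rewrite !inE mem_enum.
apply=> //; last by move=> d j; rewrite inE.
by split=> [k|k|]; rewrite ?inE //; left.
Qed.

Lemma EE_le_E_of_setD1_lt (Psi : {set 'I_K}) m :
  m \in Psi -> EE (Psi :\ m) < EE Psi -> EE Psi <= E m.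
Proof.
move=> mPsi lt_rem; rewrite leNgt; apply/negP => lt_m.
have : EE Psi <= Num.max (EE (Psi :\ m)) (E m).
  apply: (@EE_exchange (Psi :\ m)); first by rewrite le_max lexx.
    by move=> k; rewrite !inE => /and3P[/negP].
  move=> k; rewrite !inE negb_and negbK => /andP[/orP[/eqP -> _|/negP //]].
  by rewrite le_max lexx orbT.
by rewrite leNgt gt_max lt_rem lt_m.
Qed.

Lemma greedy_inv_optimal (Psi P : {set 'I_K}) :
  greedy_inv [set: 'I_K] Psi -> EE P <= EE Psi.
Proof.
case=> _ le_out [Psi0|[m mPsi [lt_m lt_rem]]].
  apply: EE_exchange; first by rewrite Psi0.
    by move=> k; rewrite Psi0 !inE andbF.
  by move=> k _; apply: le_out; rewrite Psi0 !inE.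
have le_m := EE_le_E_of_setD1_lt mPsi lt_rem.
have lt_in j : j \in Psi -> j != m -> EE Psi < E j.
  by move=> jPsi jm; apply: le_lt_trans le_m (lt_m _ _); rewrite !inE jm.
have le_notin j : j \notin Psi -> E j <= EE Psi.
  by move=> jPsi; apply: le_out; rewrite !inE jPsi.
case: (boolP (m \in P)) => mP.
  apply: EE_exchange => // j; rewrite inE => /andP[jP jPsi]; last exact: le_notin.
  by apply: lt_in => //; apply: contraNneq jP => ->.
apply: EE_exchange (ltW lt_rem) _ _ => j; rewrite !inE.
  by case/and3P=> _ jm jPsi; exact: lt_in.
case/andP; rewrite negb_and negbK => /orP[/eqP ->|jPsi] jP; first by rewrite jP in mP.
exact: le_notin.
Qed.

Lemma greedy_optimal P : EE P <= EE (alg2 EE).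
Proof. exact: greedy_inv_optimal greedy_inv_alg2. Qed.

End Greedy.

Section System.
Variables (R : realType) (K N : nat) (N0 xi Pc : R) (W Rm h : 'I_K -> R)
  (g : 'I_K -> 'I_N -> R) (kp : 'I_K -> 'I_N) (B gs : 'I_N -> R).
Hypotheses (N0_gt0 : 0 < N0) (xi_gt0 : 0 < xi) (Pc_gt0 : 0 < Pc)
  (W_gt0 : forall k, 0 < W k) (Rm_gt0 : forall k, 0 < Rm k) (h_gt0 : forall k, 0 < h k)
  (g_gt0 : forall k n, 0 < g k n) (B_gt0 : forall n, 0 < B n) (gs_gt0 : forall n, 0 < gs n).

Local Notation EE := (EEopt N0 xi Pc W Rm h g kp B gs).
Local Notation E k := (trade_ee N0 xi (W k) (Rm k) (h k) (g k (kp k))).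
Local Notation tight k := (trade_tight N0 (W k) (Rm k) (h k)).
Local Notation rate k := (trade_rate N0 (g k (kp k))).
Local Notation power := (trade_power xi).

Definition sc_rate (p : 'I_N -> R) := \sum_n rho N0 (B n) (p n) (gs n).
Definition sc_power (p : 'I_N -> R) := \sum_n p n / xi + Pc.

Definition sys_rate (Psi : {set 'I_K}) p (c : 'I_K -> trade R) :=
  sc_rate p + \sum_(k in Psi) rate k (c k).
Definition sys_power (Psi : {set 'I_K}) p (c : 'I_K -> trade R) :=
  sc_power p + \sum_(k in Psi) power (c k).
Definition sys_feasible (Psi : {set 'I_K}) (p : 'I_N -> R) (c : 'I_K -> trade R) :=
  (forall n, 0 <= p n) /\ {in Psi, forall k, tight k (c k)}.

Lemma sum_xsel (Psi : {set 'I_K}) (F : 'I_K -> R) :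
  \sum_(k < K) xsel R Psi k * F k = \sum_(k in Psi) F k.
Proof.
rewrite [RHS]big_mkcond; apply: eq_bigr => k _.
by rewrite /xsel; case: ifP; rewrite ?mul1r ?mul0r.
Qed.

Lemma EEobj_value (Psi : {set 'I_K}) p (c : 'I_K -> trade R) :
  (\sum_(n < N) rho N0 (B n) (p n) (gs n)
     + \sum_(k < K) xsel R Psi k * rho N0 (relay_bw (c k)) (relay_pow (c k)) (g k (kp k)))
  / (\sum_(n < N) p n / xi + \sum_(k < K) xsel R Psi k * (relay_pow (c k) / xi)
     + \sum_(k < K) xsel R Psi k * (own_pow (c k) / xi) + Pc)
  = sys_rate Psi p c / sys_power Psi p c.
Proof.
rewrite !sum_xsel /sys_rate /sys_power /sc_power /trade_power big_split /=.
by congr (_ / _); ring.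
Qed.

Definition zero_trade : trade R := Trade 0 0 0 0.

Lemma EEobj_setP (Psi : {set 'I_K}) r : EEobj_set N0 xi Pc W Rm h g kp B gs Psi r <->
  exists p c, sys_feasible Psi p c /\ r = sys_rate Psi p c / sys_power Psi p c.
Proof.
split=> [[p [pk [bk [qk [wk [p_ge0 [c_ge0 [bw_eq [rate_eq ->]]]]]]]]]|].
  exists p, (fun k => Trade (pk k) (bk k) (qk k) (wk k)); split; last first.
    exact: (EEobj_value Psi p (fun k => Trade (pk k) (bk k) (qk k) (wk k))).
  split=> // k kPsi; move: (c_ge0 k) (bw_eq k) (rate_eq k).
  by rewrite /xsel kPsi !mul1r.
case=> p [c [[p_ge0 c_tight] ->]].
pose c' k := if k \in Psi then c k else zero_trade.
have c'E : {in Psi, c' =1 c} by move=> k kPsi; rewrite /c' kPsi.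
exists p, (fun k => relay_pow (c' k)), (fun k => relay_bw (c' k)),
  (fun k => own_pow (c' k)), (fun k => own_bw (c' k)).
split=> //; split; [|split; [|split]] => [k|k|k|].
- rewrite /c' /=; case: ifP => [/c_tight[]//|_]; by split.
- rewrite /c' /xsel /=; case: ifP => [/c_tight[] _ -> _|_]; by rewrite ?mul1r ?addr0 ?mul0r.
- rewrite /c' /xsel /=; case: ifP => [/c_tight[] _ _ ->|_]; by rewrite ?mul1r ?rho0 ?mul0r.
rewrite (EEobj_value Psi p c') /sys_rate /sys_power.
by congr ((_ + _) / (_ + _)); apply: eq_bigr => k /c'E ->.
Qed.

Section Feasible.
Variables (Psi : {set 'I_K}) (p : 'I_N -> R) (c : 'I_K -> trade R).
Hypothesis feas : sys_feasible Psi p c.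

Let p_ge0 : forall n, 0 <= p n. Proof. by case: feas. Qed.
Let c_nonneg k : k \in Psi -> trade_nonneg (c k). Proof. by move=> /feas.2[]. Qed.

Let sc_sum_ge0 : 0 <= \sum_n p n / xi.
Proof. by apply: sumr_ge0 => n _; rewrite divr_ge0 // ltW. Qed.

Let trade_sum_ge0 : 0 <= \sum_(k in Psi) power (c k).
Proof. by apply: sumr_ge0 => k /c_nonneg; exact: trade_power_ge0. Qed.

Lemma sys_power_ge_Pc : Pc <= sys_power Psi p c.
Proof. by rewrite /sys_power /sc_power; have := sc_sum_ge0; have := trade_sum_ge0; lra. Qed.

Lemma sys_power_gt0 : 0 < sys_power Psi p c.
Proof. exact: lt_le_trans Pc_gt0 sys_power_ge_Pc. Qed.

Lemma sc_pow_le n : p n <= xi * sys_power Psi p c.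
Proof.
rewrite -ler_pdivrMl // mulrC; apply: le_trans (_ : \sum_n p n / xi <= _).
  apply: (@ler_sum_term _ _ xpredT (fun n => p n / xi)) => // j _.
  by rewrite divr_ge0 // ltW.
by rewrite /sys_power /sc_power -addrA lerDl addr_ge0 // ltW.
Qed.

Lemma trade_power_le k : k \in Psi -> power (c k) <= sys_power Psi p c.
Proof.
move=> kPsi; apply: le_trans (_ : \sum_(j in Psi) power (c j) <= _).
  by apply: ler_sum_term => // j /c_nonneg; exact: trade_power_ge0.
by rewrite /sys_power /sc_power lerDr addr_ge0 // ltW.
Qed.

Lemma relay_pow_le k : k \in Psi -> relay_pow (c k) <= xi * sys_power Psi p c.
Proof.
move=> kPsi; have [rp_ge0 _ q_ge0 _] := c_nonneg kPsi.
rewrite -ler_pdivrMl // mulrC; apply: le_trans (trade_power_le kPsi).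
by rewrite /trade_power lerDl divr_ge0 // ltW.
Qed.

Lemma sys_rate_ge0 : 0 <= sys_rate Psi p c.
Proof.
rewrite addr_ge0 //; first by apply: sumr_ge0 => n _; rewrite rho_ge0 // ltW.
by apply: sumr_ge0 => k /c_nonneg; exact: trade_rate_ge0.
Qed.

(* Every term of [sys_rate] is a [rho] with bandwidth at most [b], gain at most [gm] and
   power at most [xi * sys_power], so [rho_le_sqrt_bound] applies termwise. *)
Lemma sys_rate_le_sqrt b gm : (forall n, B n <= b) -> (forall k, W k <= b) ->
  (forall n, gs n <= gm) -> (forall k, g k (kp k) <= gm) ->
  sys_rate Psi p c <=
    (N + K)%:R * (2 / ln 2) * Num.sqrt (b ^+ 2 + b * xi * gm / N0 * sys_power Psi p c).
Proof.
move=> le_B le_W le_gs le_g; set Y := sys_power Psi p c.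
set T := 2 / ln 2 * Num.sqrt (b ^+ 2 + b * (xi * Y) * gm / N0).
have T_ge0 : 0 <= T by rewrite mulr_ge0 ?sqrtr_ge0 ?divr_ge0 // ltW // ln2_gt0.
have sc_le : sc_rate p <= T *+ N.
  rewrite -[in leRHS](card_ord N) -sumr_const; apply: ler_sum => n _.
  by apply: rho_le_sqrt_bound;
    rewrite ?(ltW (B_gt0 n)) ?(ltW (gs_gt0 n)) ?p_ge0 ?le_B ?le_gs ?sc_pow_le.
have trade_le : \sum_(k in Psi) rate k (c k) <= T *+ K.
  apply: le_trans (_ : T *+ #|Psi| <= _); last first.
    rewrite -[T *+ #|Psi|]mulr_natr -[T *+ K]mulr_natr ler_wpM2l // ler_nat.
    by apply: leq_trans (max_card _) _; rewrite card_ord.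
  rewrite -sumr_const; apply: ler_sum => k kPsi.
  have [[rp_ge0 rb_ge0 _ ow_ge0] bw_eq _] := feas.2 k kPsi.
  have rb_le : relay_bw (c k) <= b by apply: le_trans (le_W k); rewrite -bw_eq lerDl.
  by apply: rho_le_sqrt_bound;
    rewrite ?rb_ge0 ?rb_le ?rp_ge0 ?relay_pow_le ?(ltW (g_gt0 _ _)) ?le_g.
rewrite /sys_rate; apply: le_trans (lerD sc_le trade_le) _.
rewrite -mulrnDr [(N + K)%:R * _]mulr_natl [_ *+ (N + K) * _]mulrnAl /T.
by have -> : b ^+ 2 + b * (xi * Y) * gm / N0 = b ^+ 2 + b * xi * gm / N0 * Y by ring.
Qed.

End Feasible.

Lemma sys_rate_sublinear : exists C a d : R, [/\ 0 <= C, 0 <= a, 0 <= d &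
  forall Psi p c, sys_feasible Psi p c ->
    sys_rate Psi p c <= C * Num.sqrt (a + d * sys_power Psi p c)].
Proof.
have [Mb Mb_ge0 le_Mb] := finite_family_ubound B.
have [Mw Mw_ge0 le_Mw] := finite_family_ubound W.
have [Mgs Mgs_ge0 le_Mgs] := finite_family_ubound gs.
have [Mg Mg_ge0 le_Mg] := finite_family_ubound (fun k => g k (kp k)).
have b_ge0 : 0 <= Mb + Mw by rewrite addr_ge0.
have gm_ge0 : 0 <= Mgs + Mg by rewrite addr_ge0.
exists ((N + K)%:R * (2 / ln (2 : R))), ((Mb + Mw) ^+ 2),
  ((Mb + Mw) * xi * (Mgs + Mg) / N0).
split; first by apply: mulr_ge0 => //; apply: divr_ge0 => //; exact/ltW/ln2_gt0.
- exact: sqr_ge0.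
- by apply: divr_ge0; rewrite ?mulr_ge0 // ltW.
move=> Psi p c feas; apply: sys_rate_le_sqrt => // [n|k|n|k].
- by apply: le_trans (le_Mb n) _; rewrite lerDl.
- by apply: le_trans (le_Mw k) _; rewrite lerDr.
- by apply: le_trans (le_Mgs n) _; rewrite lerDl.
- by apply: le_trans (le_Mg k) _; rewrite lerDr.
Qed.

Lemma EEobj_set_ne Psi : (EEobj_set N0 xi Pc W Rm h g kp B gs Psi !=set0)%classic.
Proof.
pose c k := idle_trade N0 (W k) (Rm k) (h k).
exists (sys_rate Psi (fun _ => 0) c / sys_power Psi (fun _ => 0) c).
apply/EEobj_setP; exists (fun _ => 0), c; split=> //.
by split=> // k _; exact: idle_trade_tight.
Qed.

Lemma EEobj_set_ub Psi : has_ubound (EEobj_set N0 xi Pc W Rm h g kp B gs Psi).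
Proof.
have [C [a [d [C_ge0 a_ge0 d_ge0 rate_le]]]] := sys_rate_sublinear.
exists (C * (1 + a) / Pc + C * d) => _ /EEobj_setP[p [c [feas ->]]].
by apply: ratio_le_of_sqrt_bound => //; [exact: sys_power_ge_Pc | exact: rate_le].
Qed.

Lemma EE_ge_value Psi p c : sys_feasible Psi p c ->
  sys_rate Psi p c / sys_power Psi p c <= EE Psi.
Proof.
by move=> feas; apply: (ub_le_sup (EEobj_set_ub Psi)); apply/EEobj_setP; exists p, c.
Qed.

Lemma EE_le Psi mu :
  (forall p c, sys_feasible Psi p c -> sys_rate Psi p c <= mu * sys_power Psi p c) ->
  EE Psi <= mu.
Proof.
move=> rate_le; apply: ge_sup (EEobj_set_ne Psi) _ => _ /EEobj_setP[p [c [feas ->]]].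
by rewrite ler_pdivrMr ?sys_power_gt0 // rate_le.
Qed.

Lemma EE_ge0 Psi : 0 <= EE Psi.
Proof.
have [_ /EEobj_setP[p [c [feas _]]]] := EEobj_set_ne Psi.
apply: le_trans (EE_ge_value feas).
by rewrite divr_ge0 ?sys_rate_ge0 // ltW // sys_power_gt0.
Qed.

(* Near-optimal points have bounded power: by [sys_rate_sublinear] their rate grows only
   like the square root of their power, while it must stay above half of [EE Psi] times it. *)
Lemma EE_near Psi gam : 0 < gam ->
  exists p c, sys_feasible Psi p c /\ EE Psi * sys_power Psi p c - gam < sys_rate Psi p c.
Proof.
move=> gam_gt0; set lam := EE Psi.
have [_ /EEobj_setP[p0 [c0 [feas0 _]]]] := EEobj_set_ne Psi.
have [lam0|lam_gt0] := eqVneq lam 0.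
  exists p0, c0; split=> //; rewrite lam0 mul0r sub0r.
  by apply: lt_le_trans (sys_rate_ge0 feas0); rewrite oppr_lt0.
have {}lam_gt0 : 0 < lam by rewrite lt_def lam_gt0 EE_ge0.
have [C [a [d [C_ge0 a_ge0 d_ge0 rate_le]]]] := sys_rate_sublinear.
set M := 1 + C ^+ 2 * (a + d) / (lam / 2) ^+ 2.
have M_gt0 : 0 < M.
  apply: ltr_pwDl => //; apply: divr_ge0 (sqr_ge0 _).
  exact: mulr_ge0 (sqr_ge0 _) (addr_ge0 a_ge0 d_ge0).
set eps := Num.min (lam / 2) (gam / M).
have eps_gt0 : 0 < eps by rewrite lt_min !divr_gt0.
have has_sup_EE : has_sup (EEobj_set N0 xi Pc W Rm h g kp B gs Psi).
  by split; [exact: EEobj_set_ne | exact: EEobj_set_ub].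
have [_ /EEobj_setP[p [c [feas ->]]]] := sup_adherent eps_gt0 has_sup_EE.
rewrite -[sup _]/lam ltr_pdivlMr ?sys_power_gt0 // => rate_gt.
exists p, c; split=> //; set Y := sys_power Psi p c in rate_gt *.
have Y_gt0 : 0 < Y := sys_power_gt0 feas.
have eps_le : eps <= lam / 2 by rewrite ge_min lexx.
have Y_le : Y <= M.
  apply: le_of_sqrt_bound (ltW Y_gt0) _; rewrite ?divr_gt0 //.
  apply: le_trans (rate_le _ _ _ feas); apply: le_trans (ltW rate_gt).
  by apply: ler_wpM2r; [exact: ltW | lra].
have : eps * Y <= gam.
  apply: le_trans (_ : gam / M * M <= _); last by rewrite divfK ?gt_eqF.
  by apply: ler_pM => //; [exact: ltW | exact: ltW | rewrite ge_min lexx orbT].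
nra.
Qed.

Lemma sys_rate_sub_power Psi p c mu :
  sys_rate Psi p c - mu * sys_power Psi p c =
  sc_rate p - mu * sc_power p + \sum_(k in Psi) (rate k (c k) - mu * power (c k)).
Proof. by rewrite /sys_rate /sys_power sumrB -mulr_sumr; ring. Qed.

(* A feasible point of [P] becomes one of [S] by giving each MU of [S] missing from [P] a
   trade with positive contribution at level [mu]; the MUs of [P] missing from [S]
   contributed nonpositively. *)
Lemma EE_exchange (S P : {set 'I_K}) mu : EE S <= mu ->
  {in S :\: P, forall k, mu < E k} -> {in P :\: S, forall k, E k <= mu} -> EE P <= mu.
Proof.
move=> le_S gt_SP le_PS; have mu_ge0 := le_trans (EE_ge0 S) le_S.
have [t t_good] : exists t : 'I_K -> trade R, forall k, mu < E k ->
    tight k (t k) /\ mu * power (t k) < rate k (t k).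
  apply: (@fin_all_exists _ (fun=> trade R)
    (fun k t => mu < E k -> tight k t /\ mu * power t < rate k t)) => k.
  have [lt_k|_] := ltP mu (E k); last by exists zero_trade.
  have [t' t'_tight gt_t'] := tight_trade_gt N0_gt0 xi_gt0 (W_gt0 k) (Rm_gt0 k) (h_gt0 k)
    (g_gt0 k (kp k)) mu_ge0 lt_k.
  by exists t'.
apply: EE_le => p c [p_ge0 c_tight].
pose c' k := if k \in P then c k else t k.
have feas' : sys_feasible S p c'.
  split=> // k kS; rewrite /c'; case: ifP => kP; first exact: c_tight.
  have kSP : k \in S :\: P by rewrite inE kP kS.
  by case: (t_good k (gt_SP k kSP)).
have le0 : sys_rate S p c' - mu * sys_power S p c' <= 0.
  rewrite subr_le0; apply: le_trans (_ : EE S * sys_power S p c' <= _).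
    by rewrite -ler_pdivrMr ?sys_power_gt0 //; exact: EE_ge_value.
  by apply: ler_wpM2r => //; exact: ltW (sys_power_gt0 feas').
rewrite -subr_le0; apply: le_trans le0.
rewrite !sys_rate_sub_power lerD2l [leLHS]big_mkcond [leRHS]big_mkcond /=.
apply: ler_sum => k _; rewrite /c'; case: ifP => kP; case: ifP => kS //.
  have kt := trade_tight_ok (c_tight k kP).
  have kPS : k \in P :\: S by rewrite inE kS kP.
  rewrite subr_le0.
  apply: le_trans (trade_rate_le_ee N0_gt0 xi_gt0 (Rm_gt0 k) (g_gt0 k (kp k)) kt) _.
  by apply: ler_wpM2r; [exact: ltW (trade_power_gt0 xi_gt0 (Rm_gt0 k) kt) | exact: le_PS].
have kSP : k \in S :\: P by rewrite inE kP kS.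
by case: (t_good k (gt_SP k kSP)) => _ /ltW; rewrite subr_ge0.
Qed.

Lemma EE_setU1_gt (S : {set 'I_K}) k : k \notin S -> EE S < E k -> EE S < EE (k |: S).
Proof.
move=> kS lt_k; set lam := EE S.
have [t t_tight gt_t] := tight_trade_gt N0_gt0 xi_gt0 (W_gt0 k) (Rm_gt0 k) (h_gt0 k)
  (g_gt0 k (kp k)) (EE_ge0 S) lt_k.
rewrite -subr_gt0 in gt_t; have [p [c [[p_ge0 c_tight] near]]] := EE_near S gt_t.
pose c' j := if j == k then t else c j.
have feas' : sys_feasible (k |: S) p c'.
  split=> // j; rewrite /c' !inE.
  by case: eqP => [-> _|_ jS]; [exact: t_tight | exact: c_tight].
apply: lt_le_trans (EE_ge_value feas').
rewrite ltr_pdivlMr ?sys_power_gt0 // -subr_gt0 sys_rate_sub_power big_setU1 //=.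
rewrite /c' eqxx (eq_bigr (fun j => rate j (c j) - lam * power (c j))); last first.
  by move=> j jS; case: eqP jS => [->|]; rewrite ?(negPf kS).
have := sys_rate_sub_power S p c lam; rewrite -/lam in near; lra.
Qed.

Lemma EEtradeE k : EEtrade N0 xi W Rm h g kp k = E k.
Proof.
rewrite /EEtrade /trade_ee /trade_ratios; congr sup; apply/seteqP; split=> r.
  case=> pk [bk [qk [wk [t_ge0 [bw_le [rate_le ->]]]]]].
  by exists (Trade pk bk qk wk).
case=> t [t_ge0 bw_le rate_le] <-.
by exists (relay_pow t), (relay_bw t), (own_pow t), (own_bw t).
Qed.

End System.

Theorem corollary1 (R : realType) (K N : nat)
  (N0 xi Pc : R) (W Rm h : 'I_K -> R) (g : 'I_K -> 'I_N -> R)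
  (kp : 'I_K -> 'I_N) (B gs : 'I_N -> R)
  (hN0 : 0 < N0) (hxi0 : 0 < xi) (hxi1 : xi <= 1) (hPc : 0 < Pc)
  (hW : forall k, 0 < W k) (hRm : forall k, 0 < Rm k) (hh : forall k, 0 < h k)
  (hg : forall k n, 0 < g k n) (hB : forall n, 0 < B n) (hgs : forall n, 0 < gs n)
  (hkp : forall k n, g k n <= g k (kp k))
  (horder : forall i j : 'I_K, (i < j)%N ->
     EEtrade N0 xi W Rm h g kp j < EEtrade N0 xi W Rm h g kp i) :
  let EE := EEopt N0 xi Pc W Rm h g kp B gs in
  forall Psi' : {set 'I_K}, EE Psi' <= EE (alg2 EE).
Proof.
move=> EE; apply: greedy_optimal.
- exact: EE_exchange hN0 hxi0 hPc hW hRm hh hg hB hgs.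
- exact: EE_setU1_gt hN0 hxi0 hPc hW hRm hh hg hB hgs.
- by move=> i j /horder; rewrite !EEtradeE.
Qed.
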